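(* Let $r\geq 1$ and let $J_r$ be the $r\times r$ matrix with $1$'s on the diagonal and on the superdiagonal and $0$'s elsewhere. There exists a constant $C=C(r)$ such that if $n\geq 2$ and $x_1,\dots,x_r\in\mathbb R$ satisfy $|x_j|\leq n^{-(j-1)}$ for $1\leq j\leq r$, then $\bigl|\sum_{j=1}^r (J_r^k)_{i,j}x_j\bigr|\leq C$ for $1\leq i\leq r$ and $0\leq k<n$. On the other hand, there exists a constant $C'=C'(r)>0$ such that if $n\geq 2$ and $x_1,\dots,x_r\in\mathbb R$ satisfy $\bigl|\sum_{j=1}^r (J_r^k)_{i,j}x_j\bigr|\leq 1$ for $1\leq i\leq r$ and $0\leq k<n$, then $|x_j|\leq C' n^{-(j-1)}$ for $1\leq j\leq r$. *)

From mathcomp Require Import all_boot all_order all_algebra.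
From mathcomp Require Import reals.
Set Implicit Arguments. Unset Strict Implicit. Unset Printing Implicit Defensive.
Import Order.TTheory GRing.Theory Num.Theory.
Local Open Scope ring_scope.

(* J_r: r x r matrix with 1 on the diagonal and superdiagonal, 0 elsewhere.
   Indices are 0-based ('I_r): entry (i,j) is 1 iff j = i or j = i+1. *)
Definition Jmx (R : pzRingType) (r : nat) : 'M[R]_r :=
  \matrix_(i < r, j < r) (if (j == i :> nat) || (j == i.+1 :> nat) then 1 else 0).

From mathcomp Require Import all_boot all_order all_algebra.
From mathcomp Require Import reals.
From mathcomp Require Import zify ring.
Set Implicit Arguments. Unset Strict Implicit. Unset Printing Implicit Defensive.
Import Order.TTheory GRing.Theory Num.Theory.
Local Open Scope ring_scope.

(* The entries of [J^k] are binomial coefficients, [(J^k)_(i,j) = 'C(k, j - i)],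
   and ['C(k, e) <= n^e] gives the first bound.  For the second one take
   [h = n %/ r] and [D = J^h - 1]: it is strictly upper triangular with entries
   ['C(h, s - t) <= h^(s - t)] and superdiagonal [h].  Since [D^l J^k x] is an
   [l]-th finite difference of the bounded sequence [k |-> J^k x], its first
   coordinate is at most [2^l]; its first nonzero coefficient is [h^l] at [x_l],
   so [z_l = h^l x_l] is bounded in terms of the later [z_s], and a backward
   induction bounds every [z_l].  As [n <= 2 r h], [|x_l| = O(n^-l)]. *)

Lemma bin_leq_expn (n m : nat) : ('C(n, m) <= n ^ m)%N.
Proof.
apply: (@leq_trans (n ^_ m)); first by rewrite -bin_ffact leq_pmulr // fact_gt0.
elim: m => [|m IHm] //.
by rewrite ffactnSr expnS mulnC leq_mul // leq_subr.
Qed.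

Lemma sum_mul_Jmx (R : pzRingType) (r : nat) (F : nat -> R) (j : 'I_r) :
  \sum_(t < r) F t * Jmx R r t j = F j + (if (0 < j)%N then F j.-1 else 0).
Proof.
transitivity (\sum_(t < r) ((if t == j then F t else 0) +
                            (if t.+1 == j :> nat then F t else 0))).
  apply: eq_bigr => t _; rewrite mxE.
  case: (eqVneq t j) => [->|ntj].
    by rewrite eqxx /= ifN ?mulr1 ?addr0 // eqn_leq ltnn.
  rewrite -[j == t :> nat]/(j == t) eq_sym (negbTE ntj) add0r /= (eq_sym _ t.+1).
  by case: (t.+1 == j :> nat); rewrite ?mulr1 ?mulr0.
rewrite big_split /= -big_mkcond (big_pred1 j) //; congr (_ + _).
case: j => [[|j] ltjr] /=; first exact: big1.
by rewrite -big_mkcond (big_pred1 (Ordinal (ltnW ltjr))).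
Qed.

Lemma Jmx_expE (R : pzRingType) (r k : nat) (i j : 'I_r) :
  (Jmx R r ^+ k) i j = if (i <= j)%N then ('C(k, j - i))%:R else 0.
Proof.
elim: k i j => [|k IHk] i j.
  rewrite expr0 mxE bin0n -[i == j]/(i == j :> nat).
  case: leqP => le_ij; last by rewrite gtn_eqF.
  by rewrite subn_eq0 eqn_leq le_ij.
rewrite exprSr mxE.
under eq_bigr do rewrite IHk.
rewrite (@sum_mul_Jmx _ _ (fun t => if (i <= t)%N then ('C(k, t - i))%:R else 0)).
case: j => [[|j] ltjr] /=.
  by rewrite addr0; case: (i <= 0)%N; rewrite ?subn0 ?bin0.
case: (ltngtP i j.+1) => cmp_ij.
- by rewrite -ltnS cmp_ij subSn // binS natrD addrC.
- by rewrite ifN ?add0r // -ltnNge ltnW.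
- by rewrite cmp_ij subnn leqNgt ltnSn /= !bin0 addr0.
Qed.

Lemma Jmx_expB1E (R : pzRingType) (r h : nat) (t s : 'I_r) :
  (Jmx R r ^+ h - 1) t s = if (t < s)%N then ('C(h, s - t))%:R else 0.
Proof.
rewrite !mxE Jmx_expE -[t == s]/(t == s :> nat).
by case: ltngtP => [||->]; rewrite ?subr0 // subnn bin0 subrr.
Qed.

Lemma Jmx_expB1_norm_le (R : numDomainType) (r h : nat) (t s : 'I_r) :
  `|(Jmx R r ^+ h - 1) t s| <= if (t < s)%N then h%:R ^+ (s - t) else 0.
Proof.
rewrite Jmx_expB1E; case: ifP => _; last by rewrite normr0.
by rewrite normr_nat -natrX ler_nat bin_leq_expn.
Qed.

Lemma Jmx_expB1_superdiag (R : pzRingType) (r h : nat) (t s : 'I_r) :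
  s = t.+1 :> nat -> (Jmx R r ^+ h - 1) t s = h%:R.
Proof. by move=> def_s; rewrite Jmx_expB1E def_s ltnSn subSnn bin1. Qed.

Section StrictlyUpperTriangular.

Variables (R : numDomainType) (r : nat) (N : 'M[R]_r) (h : R).
Hypothesis h_ge0 : 0 <= h.
Hypothesis N_norm_le :
  forall t s : 'I_r, `|N t s| <= if (t < s)%N then h ^+ (s - t) else 0.
Hypothesis N_superdiag : forall t s : 'I_r, s = t.+1 :> nat -> N t s = h.

Lemma norm_strict_upper_exp_le m (i s : 'I_r) :
  `|(N ^+ m) i s| <= if (i + m <= s)%N then r%:R ^+ m * h ^+ (s - i) else 0.
Proof.
elim: m i s => [|m IHm] i s.
  rewrite expr0 mxE addn0 expr0 mul1r -[i == s]/(i == s :> nat).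
  by case: ltngtP => [||->]; rewrite ?normr0 ?exprn_ge0 // normr1 subnn expr0.
rewrite exprSr mxE (le_trans (ler_norm_sum _ _ _)) //.
case: ifP => le_s.
  apply: (@le_trans _ _ (\sum_(t < r) r%:R ^+ m * h ^+ (s - i))); last first.
    by rewrite sumr_const card_ord exprSr mulrAC mulr_natr.
  apply: ler_sum => t _; rewrite normrM.
  apply: (le_trans (ler_pM (normr_ge0 _) (normr_ge0 _) (IHm i t) (N_norm_le t s))).
  case: ifP => le_t; last by rewrite mul0r mulr_ge0 ?exprn_ge0.
  case: ifP => lt_ts; last by rewrite mulr0 mulr_ge0 ?exprn_ge0.
  by rewrite -mulrA -exprD; have -> : (t - i + (s - t) = s - i)%N by lia.
rewrite big1 // => t _; apply/eqP; rewrite normrM mulf_eq0 !normr_eq0 -!normr_le0.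
case: (leqP (i + m) t) => le_t.
  by rewrite (le_trans (N_norm_le t s)) ?orbT // ifF //; lia.
by rewrite (le_trans (IHm i t)) // leqNgt le_t.
Qed.

Lemma strict_upper_exp_superdiag m (i s : 'I_r) :
  s = (i + m)%N :> nat -> (N ^+ m) i s = h ^+ m.
Proof.
elim: m i s => [|m IHm] i s def_s.
  have -> : s = i by apply: val_inj; rewrite /= def_s addn0.
  by rewrite expr0 mxE eqxx.
have lt_im_r : (i + m < r)%N by have := ltn_ord s; lia.
rewrite exprSr mxE (bigD1 (Ordinal lt_im_r)) //= IHm // N_superdiag ?def_s ?addnS //.
rewrite big1 ?addr0 -?exprSr // => t ne_t.
have {}ne_t : (t : nat) != (i + m)%N by exact: ne_t.
apply/eqP; rewrite mulf_eq0 -!normr_le0.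
case: (ltnP t (i + m)) => cmp_t.
  by rewrite (le_trans (norm_strict_upper_exp_le m i t)) // leqNgt cmp_t.
by rewrite (le_trans (N_norm_le t s)) ?orbT // ifF //; lia.
Qed.

End StrictlyUpperTriangular.

Lemma norm_diff_expmx_le (R : numDomainType) (r n h : nat) (A : 'M[R]_r)
    (x : 'cV[R]_r) :
  (forall i k, (k < n)%N -> `|(A ^+ k *m x) i 0| <= 1) ->
  forall m k i, (k + m * h < n)%N ->
  `|((A ^+ h - 1) ^+ m *m (A ^+ k *m x)) i 0| <= 2 ^+ m.
Proof.
move=> Ax_le1; elim=> [|m IHm] k i lt_kmh_n.
  by rewrite expr0 mul1mx expr0 Ax_le1 // -[k]addn0 (leq_ltn_trans _ lt_kmh_n).
have mulE (B C : 'M[R]_r) : B * C = B *m C by [].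
rewrite exprSr mulE -mulmxA mulmxBl mul1mx mulmxA -mulE -exprD mulmxBr mxE.
rewrite (le_trans (ler_normD _ _)) // [X in _ + `|X|]mxE normrN.
by rewrite exprS mulrDl mul1r lerD // IHm //; rewrite mulSn in lt_kmh_n; lia.
Qed.

Lemma upper_recursion_bound (R : numDomainType) (r : nat) (a b : R)
    (u : 'I_r -> R) :
  0 <= a -> 0 <= b ->
  (forall l : 'I_r, u l <= a + b * \sum_(s < r | (l < s)%N) u s) ->
  forall l : 'I_r, u l <= a * (1 + r%:R * b) ^+ (r - l).
Proof.
move=> a_ge0 b_ge0 u_le; set c := 1 + r%:R * b.
have c_ge1 : 1 <= c by rewrite lerDl mulr_ge0.
suff IH d (l : 'I_r) : (r - l <= d)%N -> u l <= a * c ^+ d by move=> l; exact: IH.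
elim: d l => [|d IHd] l le_d; first by have := ltn_ord l; lia.
set B := a * c ^+ d.
have le_aB : a <= B by rewrite ler_peMr // exprn_ege1.
have sum_le : \sum_(s < r | (l < s)%N) u s <= B *+ r.
  apply: (@le_trans _ _ (\sum_(s < r) B)); last by rewrite sumr_const card_ord.
  rewrite big_mkcond /=; apply: ler_sum => s _.
  by case: ifP => lt_ls; [apply: IHd; lia | exact: le_trans a_ge0 le_aB].
apply: (le_trans (u_le l)).
apply: (le_trans (lerD (lexx a) (ler_wpM2l b_ge0 sum_le))).
rewrite exprSr mulrA {2}/c mulrDr mulr1 lerD //.
suff -> : b * (B *+ r) = a * c ^+ d * (r%:R * b) by [].
by rewrite -mulr_natr /B; ring.
Qed.

Lemma norm_Jmx_exp_sum_le (R : numFieldType) (r n k : nat) (x : 'I_r -> R)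
    (i : 'I_r) :
  (0 < n)%N -> (k < n)%N -> (forall j : 'I_r, `|x j| <= n%:R ^- j) ->
  `|\sum_(j < r) (Jmx R r ^+ k) i j * x j| <= r%:R.
Proof.
move=> n_gt0 lt_kn x_le; apply: (le_trans (ler_norm_sum _ _ _)).
apply: (@le_trans _ _ (\sum_(j < r) (1 : R))); last by rewrite sumr_const card_ord.
apply: ler_sum => j _; rewrite normrM Jmx_expE.
case: leqP => le_ij; last by rewrite normr0 mul0r.
rewrite normr_nat (le_trans (ler_wpM2l (ler0n _ _) (x_le j))) //.
rewrite ler_pdivrMr ?exprn_gt0 ?ltr0n // mul1r.
apply: (@le_trans _ _ (k%:R ^+ (j - i))); first by rewrite -natrX ler_nat bin_leq_expn.
apply: (@le_trans _ _ (n%:R ^+ (j - i))).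
  by rewrite lerXn2r ?nnegrE // ler_nat ltnW.
by apply: ler_weXn2l; rewrite ?ler1n ?leq_subr.
Qed.

(* [(2 r)^r] absorbs [n <= 2 r h]; the other factor is the bound of
   [upper_recursion_bound] for [a = 2^r], [b = r^r]. *)
Definition decay_const (R : numDomainType) (r : nat) : R :=
  (2 * r%:R) ^+ r * (2 ^+ r * (1 + r%:R * r%:R ^+ r) ^+ r).

Section LowerBound.

Variables (R : realType) (r n : nat) (x : 'cV[R]_r).
Hypothesis n_gt0 : (0 < n)%N.
Hypothesis Jx_le1 :
  forall (i : 'I_r) k, (k < n)%N -> `|(Jmx R r ^+ k *m x) i 0| <= 1.

Let h := (n %/ r)%N.

Lemma scaled_entry_le (l : 'I_r) :
  h%:R ^+ l * `|x l 0| <=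
  2 ^+ r + r%:R ^+ r * \sum_(s < r | (l < s)%N) h%:R ^+ s * `|x s 0|.
Proof.
have r_gt0 : (0 < r)%N by exact: leq_ltn_trans (leq0n l) (ltn_ord l).
pose o : 'I_r := Ordinal r_gt0.
have o_val : o = 0%N :> nat by [].
pose D := Jmx R r ^+ h - 1.
have D_norm_le := @Jmx_expB1_norm_le R r h.
have D_superdiag := @Jmx_expB1_superdiag R r h.
have lt_lh_n : (0 + l * h < n)%N.
  have := leq_divM n r; have := ltn_ord l; rewrite -/h; nia.
have := norm_diff_expmx_le Jx_le1 o lt_lh_n; rewrite expr0 mul1mx mxE -/D.
rewrite (bigID (fun s : 'I_r => (l < s)%N)) /= addrC (bigD1 l) ?ltnn //=.
rewrite (strict_upper_exp_superdiag (ler0n _ _) D_norm_le D_superdiag) //.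
rewrite big1 ?addr0; last first.
  move=> s /andP[]; rewrite -leqNgt => le_sl ne_sl.
  have {}ne_sl : (s : nat) != l by exact: ne_sl.
  apply/eqP; rewrite mulf_eq0 -normr_le0.
  rewrite (le_trans (norm_strict_upper_exp_le (ler0n _ _) D_norm_le l o s)) //.
  by rewrite ifF // o_val add0n; lia.
set rest := \sum_(s < r | _) _ => Dx_le.
have -> : h%:R ^+ l * `|x l 0| = `|h%:R ^+ l * x l 0|.
  by rewrite normrM normrX normr_nat.
rewrite -[h%:R ^+ l * x l 0](addrK rest).
rewrite (le_trans (ler_normB _ _)) // lerD //.
  by rewrite (le_trans Dx_le) // ler_weXn2l ?ler1n // ltnW.
rewrite (le_trans (ler_norm_sum _ _ _)) // mulr_sumr ler_sum // => s lt_ls.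
rewrite normrM mulrA ler_wpM2r //.
rewrite (le_trans (norm_strict_upper_exp_le (ler0n _ _) D_norm_le l o s)) //.
rewrite o_val add0n subn0 ifT; last exact: ltnW.
by rewrite ler_wpM2r ?exprn_ge0 // ler_weXn2l ?ler1n // ltnW.
Qed.

Lemma norm_col_mul_expn_le (j : 'I_r) : `|x j 0| * n%:R ^+ j <= decay_const R r.
Proof.
have r_gt0 : (0 < r)%N by exact: leq_ltn_trans (leq0n j) (ltn_ord j).
set c : R := 1 + r%:R * r%:R ^+ r.
have c_ge1 : 1 <= c by rewrite lerDl mulr_ge0 ?exprn_ge0.
rewrite /decay_const -/c.
have x_le1 : `|x j 0| <= 1 by have := Jx_le1 j n_gt0; rewrite expr0 mul1mx.
case: (ltnP n r) => [lt_n_r | le_r_n].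
  apply: (le_trans (ler_wpM2r (exprn_ge0 _ (ler0n _ _)) x_le1)); rewrite mul1r.
  rewrite -[n%:R ^+ j]mulr1 ler_pM ?exprn_ge0 ?mulr_ege1 ?exprn_ege1 ?ler1n //.
  apply: (@le_trans _ _ (n%:R ^+ r)).
    by apply: ler_weXn2l; rewrite ?ler1n // ltnW.
  by rewrite lerXn2r ?nnegrE ?mulr_ge0 // -natrM ler_nat; lia.
have h_gt0 : (0 < h)%N by rewrite divn_gt0.
have n_le_2rh : (n <= 2 * r * h)%N by have := ltn_ceil n r_gt0; rewrite -/h; nia.
have expn_le : n%:R ^+ j <= (2 * r%:R) ^+ r * h%:R ^+ j :> R.
  apply: (@le_trans _ _ ((2 * r%:R) ^+ j * h%:R ^+ j)).
    by rewrite -exprMn lerXn2r ?nnegrE ?mulr_ge0 // -!natrM ler_nat.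
  rewrite ler_wpM2r ?exprn_ge0 //; apply: ler_weXn2l; last exact: ltnW.
  by rewrite -natrM ler1n muln_gt0.
have := upper_recursion_bound (exprn_ge0 _ (ler0n R 2)) (exprn_ge0 _ (ler0n R r))
  scaled_entry_le j.
rewrite -/c => z_le.
apply: (le_trans (ler_wpM2l (normr_ge0 _) expn_le)).
rewrite mulrCA ler_wpM2l ?exprn_ge0 ?mulr_ge0 // mulrC (le_trans z_le) //.
by rewrite ler_wpM2l ?exprn_ge0 //; apply: ler_weXn2l; rewrite ?leq_subr.
Qed.

End LowerBound.

Theorem lemmaB2 (R : realType) (r : nat) (hr : (1 <= r)%N) :
  (exists C : R, forall (n : nat) (x : 'I_r -> R), (2 <= n)%N ->
      (forall j : 'I_r, `|x j| <= (n%:R)^-j) ->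
      forall (i : 'I_r) (k : nat), (k < n)%N ->
        `|\sum_(j < r) ((Jmx R r) ^+ k) i j * x j| <= C)
  /\
  (exists C' : R, 0 < C' /\ forall (n : nat) (x : 'I_r -> R), (2 <= n)%N ->
      (forall (i : 'I_r) (k : nat), (k < n)%N ->
        `|\sum_(j < r) ((Jmx R r) ^+ k) i j * x j| <= 1) ->
      forall j : 'I_r, `|x j| <= C' * (n%:R)^-j).
Proof.
split.
  exists r%:R => n x n_ge2 x_le i k lt_kn.
  exact: norm_Jmx_exp_sum_le (ltnW n_ge2) lt_kn x_le.
exists (decay_const R r); split.
  by rewrite /decay_const !(mulr_gt0, exprn_gt0, addr_gt0, ltr0n) ?ltr01.
move=> n x n_ge2 Jx_le1 j; have n_gt0 : (0 < n)%N := ltnW n_ge2.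
pose X : 'cV[R]_r := \col_l x l.
have JX_le1 i k : (k < n)%N -> `|(Jmx R r ^+ k *m X) i 0| <= 1.
  by move=> lt_kn; rewrite mxE; under eq_bigr do rewrite mxE; exact: Jx_le1.
have := norm_col_mul_expn_le n_gt0 JX_le1 j.
by rewrite mxE -ler_pdivlMr ?exprn_gt0 ?ltr0n.
Qed.
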